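(* Assume each $f_i$ is $\sigma_i$-strongly convex with $L_i$-Lipschitz continuous gradient. Then for all $\lambda,\bar\lambda\in\mathbb{D}$, \[ d(\lambda)\ \ge\ d(\bar\lambda)+\langle \nabla d(\bar\lambda),\lambda-\bar\lambda\rangle-\tfrac12\|\lambda-\bar\lambda\|_W^2 . \]
   Context: Standing setup. Consider $\min_{z}\ f(z)=\sum_{i=1}^M f_i(z_i)$ subject to $Az=b$, $Cz\le c$, where $z=(z_1,\dots,z_M)$, $z_i\in\mathbb{R}^{n_i}$, $n=\sum_i n_i$, $A\in\mathbb{R}^{p\times n}$, $C\in\mathbb{R}^{q\times n}$, $b\in\mathbb{R}^p$, $c\in\mathbb{R}^q$, and each $f_i:\mathbb{R}^{n_i}\to\mathbb{R}$ is convex. The rows are partitioned into $\bar M$ blocks: $A$ has blocks $A_{ji}\in\mathbb{R}^{p_j\times n_i}$ and $C$ has blocks $C_{ji}\in\mathbb{R}^{q_j\times n_i}$ ($j=1,\dots,\bar M$, $i=1,\dots,M$, $\sum_j p_j=p$, $\sum_j q_j=q$). A matrix $E\in\{0,1\}^{\bar M\times M}$ is given such that $E_{ji}=0$ implies $A_{ji}=0$ and $C_{ji}=0$. Let $\bar{\mathcal N}_i=\{j: E_{ji}\neq 0\}$ and $\mathcal N_j=\{i:E_{ji}\ne 0\}$. Let $G=\begin{bmatrix}A\\ C\end{bmatrix}$, $g=\begin{bmatrix}b\\ c\end{bmatrix}$, dual variable $\lambda=(\nu,\mu)\in\mathbb{R}^p\times\mathbb{R}^q$, and $\mathbb{D}=\mathbb{R}^p\times\mathbb{R}^q_+$.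 The Lagrangian is $\mathcal L(z,\lambda)=f(z)+\langle\lambda,Gz-g\rangle$ and the dual function is $d(\lambda)=\min_{z\in\mathbb{R}^n}\mathcal L(z,\lambda)$; under strong convexity of $f$ it is differentiable with $\nabla d(\lambda)=Gz(\lambda)-g$, where $z(\lambda)$ is the unique minimizer of $\mathcal L(\cdot,\lambda)$. For each $i$, let $L_{d_i}=\big\|\begin{bmatrix}[A_{ji}]_{j\in\bar{\mathcal N}_i}\\ [C_{ji}]_{j\in\bar{\mathcal N}_i}\end{bmatrix}\big\|^2/\sigma_i$ (spectral norm of the stacked column blocks). Let $W=\mathrm{diag}(W_\nu,W_\mu)$ with $W_\nu=\mathrm{diag}\big(\sum_{i\in\mathcal N_j}L_{d_i}I_{p_j};\ j=1,\dots,\bar M\big)$ and $W_\mu=\mathrm{diag}\big(\sum_{i\in\mathcal N_j}L_{d_i}I_{q_j};\ j=1,\dots,\bar M\big)$. For $x$ and positive semidefinite $W$, $\|x\|_W=\sqrt{x^TWx}$. *)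

From Stdlib Require Import Reals.
Open Scope R_scope.

(* Vectors of R^n are represented by functions nat -> R; only the
   coordinates k < n are meaningful. *)
Definition vec := nat -> R.

Fixpoint rsum (n : nat) (F : nat -> R) : R :=
  match n with
  | O => 0
  | S k => rsum k F + F k
  end.

Definition dot (n : nat) (x y : vec) : R := rsum n (fun k => x k * y k).
Definition nsq (n : nat) (x : vec) : R := dot n x x.
Definition vadd (x y : vec) : vec := fun k => x k + y k.
Definition vsub (x y : vec) : vec := fun k => x k - y k.
Definition vscal (a : R) (x : vec) : vec := fun k => a * x k.

(* f : vec -> R is a function of the first n coordinates only, i.e. a
   function on R^n *)
Definition respects (n : nat) (f : vec -> R) : Prop :=
  forall x y, (forall k, (k < n)%nat -> x k = y k) -> f x = f y.

Definition strongly_convex (n : nat) (sigma : R) (f : vec -> R) : Prop :=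
  0 < sigma /\
  forall x y t, 0 <= t <= 1 ->
    f (vadd (vscal t x) (vscal (1 - t) y))
    <= t * f x + (1 - t) * f y - sigma / 2 * t * (1 - t) * nsq n (vsub x y).

Definition has_gradient (n : nat) (f : vec -> R) (x g : vec) : Prop :=
  forall eps, 0 < eps -> exists delta, 0 < delta /\
    forall h, sqrt (nsq n h) < delta ->
      Rabs (f (vadd x h) - f x - dot n g h) <= eps * sqrt (nsq n h).

Definition lipschitz_gradient (n : nat) (L : R) (f : vec -> R) : Prop :=
  exists gf : vec -> vec,
    (forall x, has_gradient n f x (gf x)) /\
    (forall x y, sqrt (nsq n (vsub (gf x) (gf y))) <= L * sqrt (nsq n (vsub x y))).

(* primal variable z = (z_1,...,z_M): z i k = k-th coordinate of z_i *)
Definition pvec := nat -> nat -> R.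
(* block matrices: A j i r c = entry (r,c) of A_{ji} *)
Definition bmat := nat -> nat -> nat -> nat -> R.
(* block vectors indexed by row blocks: b j r = r-th coordinate of b_j *)
Definition bvec := nat -> nat -> R.

(* dual variable lambda = (nu, mu), nu j = nu_j in R^{p_j}, mu j = mu_j in R^{q_j} *)
Definition dvec : Type := (bvec * bvec)%type.

Definition bmatvec (M : nat) (n : nat -> nat) (A : bmat) (z : pvec) (j : nat) : vec :=
  fun r => rsum M (fun i => rsum (n i) (fun c => A j i r c * z i c)).

Definition ddot (Mb : nat) (p q : nat -> nat) (l l' : dvec) : R :=
  rsum Mb (fun j => dot (p j) (fst l j) (fst l' j) + dot (q j) (snd l j) (snd l' j)).
Definition dnsq Mb p q (l : dvec) : R := ddot Mb p q l l.
Definition dadd (l l' : dvec) : dvec :=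
  (fun j r => fst l j r + fst l' j r, fun j r => snd l j r + snd l' j r).
Definition dsub (l l' : dvec) : dvec :=
  (fun j r => fst l j r - fst l' j r, fun j r => snd l j r - snd l' j r).

Definition in_D (Mb : nat) (q : nat -> nat) (l : dvec) : Prop :=
  forall j k, (j < Mb)%nat -> (k < q j)%nat -> 0 <= snd l j k.

Definition lagrangian (M Mb : nat) (n p q : nat -> nat) (f : nat -> vec -> R)
  (A C : bmat) (b c : bvec) (z : pvec) (l : dvec) : R :=
  rsum M (fun i => f i (z i))
  + rsum Mb (fun j => dot (p j) (fst l j) (vsub (bmatvec M n A z j) (b j)))
  + rsum Mb (fun j => dot (q j) (snd l j) (vsub (bmatvec M n C z j) (c j))).

Definition is_min_value {X : Type} (S : X -> R) (v : R) : Prop :=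
  (exists x, S x = v) /\ (forall x, v <= S x).

Definition has_dgradient (Mb : nat) (p q : nat -> nat) (F : dvec -> R) (l g : dvec) : Prop :=
  forall eps, 0 < eps -> exists delta, 0 < delta /\
    forall h, sqrt (dnsq Mb p q h) < delta ->
      Rabs (F (dadd l h) - F l - ddot Mb p q g h) <= eps * sqrt (dnsq Mb p q h).

(* || [A_{ji}; C_{ji}]_{j in Nbar_i} x ||^2  for x in R^{n_i} *)
Definition stack_nsq (Mb : nat) (n p q : nat -> nat) (E : nat -> nat -> bool)
  (A C : bmat) (i : nat) (x : vec) : R :=
  rsum Mb (fun j => if E j i then
      nsq (p j) (fun r => rsum (n i) (fun c => A j i r c * x c))
    + nsq (q j) (fun r => rsum (n i) (fun c => C j i r c * x c))
    else 0).

Definition spec_norm_sq (Mb : nat) (n p q : nat -> nat) (E : nat -> nat -> bool)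
  (A C : bmat) (i : nat) (s : R) : Prop :=
  is_lub (fun v => exists x : vec, nsq (n i) x <= 1 /\ v = stack_nsq Mb n p q E A C i x) s.

(* ||lambda||_W^2 with W = diag(W_nu, W_mu), where the j-th diagonal block of
   both W_nu and W_mu is (sum_{i in N_j} L_{d_i}) I, and L_{d_i} = Ld i *)
Definition wnsq (M Mb : nat) (p q : nat -> nat) (E : nat -> nat -> bool)
  (Ld : nat -> R) (l : dvec) : R :=
  rsum Mb (fun j =>
    rsum M (fun i => if E j i then Ld i else 0)
    * (nsq (p j) (fst l j) + nsq (q j) (snd l j))).

From Stdlib Require Import Reals Lra FunctionalExtensionality.
Open Scope R_scope.

(* Let zb and zs minimise the Lagrangian at lb and l, and u = zs - zb.  Since the
   Lagrangian is affine in the multiplier, d l = L(zs, lb) + <G zs - g, l - lb>.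
   Strong convexity makes L(zs, lb) exceed d lb by (1/2) sum_i sigma_i |u_i|^2,
   and <G zb - g, .> dominates the gradient of d at lb because d <= L(zb, .) with
   equality at lb.  What remains is the coupling <G u, l - lb>, a sum of block terms
   <A_ji u_i, nu_j> + <C_ji u_i, mu_j>; Young's inequality with weight s_i / sigma_i
   (s_i the squared spectral norm of the i-th stacked column block) splits it into
   -(1/2)|l - lb|_W^2 and a term that the strong convexity gain absorbs. *)

Lemma le_of_le_add_mul (x y c : R) : (forall e, 0 < e -> x <= y + e * c) -> x <= y.
Proof.
  intros H. apply Rnot_lt_le; intros Hlt.
  pose proof (Rabs_pos c) as Hc.
  set (e := (x - y) / (Rabs c + 1)).
  assert (He : e * (Rabs c + 1) = x - y) by (unfold e; field; lra).
  assert (Hepos : 0 < e) by (apply Rdiv_lt_0_compat; lra).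
  assert (e * c <= e * Rabs c) by (apply Rmult_le_compat_l; [lra | apply RRle_abs]).
  specialize (H e Hepos). lra.
Qed.

Lemma rsum_ext n F G : (forall k, (k < n)%nat -> F k = G k) -> rsum n F = rsum n G.
Proof.
  induction n as [|n IH]; intros H; simpl; [reflexivity|].
  rewrite IH, H; auto.
Qed.

Lemma rsum_add n F G : rsum n (fun k => F k + G k) = rsum n F + rsum n G.
Proof. induction n as [|n IH]; simpl; [ring | rewrite IH; ring]. Qed.

Lemma rsum_sub n F G : rsum n (fun k => F k - G k) = rsum n F - rsum n G.
Proof. induction n as [|n IH]; simpl; [ring | rewrite IH; ring]. Qed.

Lemma rsum_scal n a F : rsum n (fun k => a * F k) = a * rsum n F.
Proof. induction n as [|n IH]; simpl; [ring | rewrite IH; ring]. Qed.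

Lemma rsum_le n F G : (forall k, (k < n)%nat -> F k <= G k) -> rsum n F <= rsum n G.
Proof.
  induction n as [|n IH]; intros H; simpl; [lra|].
  apply Rplus_le_compat; auto.
Qed.

Lemma rsum_nonneg n F : (forall k, (k < n)%nat -> 0 <= F k) -> 0 <= rsum n F.
Proof.
  induction n as [|n IH]; intros H; simpl; [lra|].
  apply Rplus_le_le_0_compat; auto.
Qed.

Lemma rsum_swap m n (F : nat -> nat -> R) :
  rsum m (fun j => rsum n (fun i => F j i)) = rsum n (fun i => rsum m (fun j => F j i)).
Proof.
  induction m as [|m IH]; simpl.
  - induction n; simpl; lra.
  - rewrite IH, <- rsum_add. reflexivity.
Qed.

Lemma rsum_mulr n a F : rsum n (fun k => F k * a) = rsum n F * a.
Proof. induction n as [|n IH]; simpl; [ring | rewrite IH; ring]. Qed.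

Lemma rsum_lin n a b F G : rsum n (fun k => a * F k + b * G k) = a * rsum n F + b * rsum n G.
Proof. rewrite rsum_add, !rsum_scal. reflexivity. Qed.

Lemma rsum2_lin m n a b (F G : nat -> nat -> R) :
  rsum m (fun j => rsum n (fun i => a * F j i + b * G j i))
  = a * rsum m (fun j => rsum n (fun i => F j i)) + b * rsum m (fun j => rsum n (fun i => G j i)).
Proof. rewrite <- rsum_lin. apply rsum_ext; intros. apply rsum_lin. Qed.

Lemma nsq_nonneg n x : 0 <= nsq n x.
Proof. apply rsum_nonneg; intros; nra. Qed.

Lemma nsq_vscal n a x : nsq n (vscal a x) = a * a * nsq n x.
Proof. unfold nsq, dot, vscal. rewrite <- rsum_scal. apply rsum_ext; intros; ring. Qed.

Lemma dot_rsum_l m N (F : nat -> vec) h :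
  dot m (fun r => rsum N (fun i => F i r)) h = rsum N (fun i => dot m (F i) h).
Proof.
  unfold dot. rewrite <- rsum_swap. apply rsum_ext; intros r _.
  rewrite Rmult_comm, <- rsum_scal. apply rsum_ext; intros; ring.
Qed.

Lemma dot_vadd_l n x y h : dot n (vadd x y) h = dot n x h + dot n y h.
Proof. unfold dot, vadd. rewrite <- rsum_add. apply rsum_ext; intros; ring. Qed.

Lemma dot_vscal_l n t x h : dot n (vscal t x) h = t * dot n x h.
Proof. unfold dot, vscal. rewrite <- rsum_scal. apply rsum_ext; intros; ring. Qed.

Lemma dot_comm n x y : dot n x y = dot n y x.
Proof. apply rsum_ext; intros; ring. Qed.

Lemma dot_zero_l m x h : (forall r, (r < m)%nat -> x r = 0) -> dot m x h = 0.
Proof.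
  intros Hx. unfold dot. rewrite (rsum_ext _ _ (fun r => 0 * h r)).
  - rewrite rsum_scal; ring.
  - intros r Hr; rewrite Hx; auto.
Qed.

Lemma dot_young n a h t : 0 < t -> - (t * nsq n h + nsq n a / t) / 2 <= dot n a h.
Proof.
  intros Ht.
  assert (Hsq : 0 <= nsq n (vadd (vscal t h) a)) by apply nsq_nonneg.
  assert (Hexp : nsq n (vadd (vscal t h) a) = t * t * nsq n h + 2 * t * dot n a h + nsq n a).
  { unfold nsq, dot, vadd, vscal. rewrite <- !rsum_scal, <- !rsum_add.
    apply rsum_ext; intros; ring. }
  apply (Rmult_le_reg_l t); [exact Ht|].
  replace (t * (- (t * nsq n h + nsq n a / t) / 2)) with (- (t * t * nsq n h + nsq n a) / 2)
    by (field; lra).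
  lra.
Qed.

Definition dscal (t : R) (h : dvec) : dvec :=
  (fun j r => t * fst h j r, fun j r => t * snd h j r).

Section DualSpace.

Variables (Mb : nat) (p q : nat -> nat).

Lemma ddot_comm x y : ddot Mb p q x y = ddot Mb p q y x.
Proof. apply rsum_ext; intros; rewrite (dot_comm (p k)), (dot_comm (q k)); reflexivity. Qed.

Lemma ddot_dadd_l x y h : ddot Mb p q (dadd x y) h = ddot Mb p q x h + ddot Mb p q y h.
Proof.
  unfold ddot. rewrite <- rsum_add. apply rsum_ext; intros j _; simpl.
  rewrite (dot_vadd_l (p j) (fst x j) (fst y j)), (dot_vadd_l (q j) (snd x j) (snd y j)). ring.
Qed.

Lemma ddot_dscal_l t x h : ddot Mb p q (dscal t x) h = t * ddot Mb p q x h.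
Proof.
  unfold ddot. rewrite <- rsum_scal. apply rsum_ext; intros j _; simpl.
  rewrite (dot_vscal_l (p j) t (fst x j)), (dot_vscal_l (q j) t (snd x j)). ring.
Qed.

Lemma ddot_dadd_r x h k : ddot Mb p q x (dadd h k) = ddot Mb p q x h + ddot Mb p q x k.
Proof. rewrite !(ddot_comm x). apply ddot_dadd_l. Qed.

Lemma ddot_dscal_r t x h : ddot Mb p q x (dscal t h) = t * ddot Mb p q x h.
Proof. rewrite !(ddot_comm x). apply ddot_dscal_l. Qed.

Lemma dnsq_dscal t h : dnsq Mb p q (dscal t h) = t * t * dnsq Mb p q h.
Proof. unfold dnsq. rewrite ddot_dscal_l, ddot_dscal_r. ring. Qed.

Lemma dgradient_le_slope F l g h v :
  has_dgradient Mb p q F l g ->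
  (forall t, 0 < t -> F (dadd l (dscal t h)) <= F l + t * v) ->
  ddot Mb p q g h <= v.
Proof.
  intros Hg Hslope. set (N := sqrt (dnsq Mb p q h)).
  assert (HN : 0 <= N) by apply sqrt_pos.
  apply (le_of_le_add_mul _ _ N); intros eps Heps.
  destruct (Hg eps Heps) as [delta [Hdelta Hnear]].
  set (t := delta / (N + 1)).
  assert (Ht : 0 < t) by (apply Rdiv_lt_0_compat; lra).
  assert (Hnorm : sqrt (dnsq Mb p q (dscal t h)) = t * N).
  { rewrite dnsq_dscal, sqrt_mult_alt, sqrt_square; [reflexivity | lra | nra]. }
  assert (HtN : t * N < delta).
  { assert (t * (N + 1) = delta) by (unfold t; field; lra). nra. }
  specialize (Hnear (dscal t h)). rewrite Hnorm, ddot_dscal_r in Hnear.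
  specialize (Hnear HtN). specialize (Hslope t Ht).
  pose proof (Rle_abs (- (F (dadd l (dscal t h)) - F l - t * ddot Mb p q g h)))
    as Habs; rewrite Rabs_Ropp in Habs.
  apply (Rmult_le_reg_l t); [exact Ht | lra].
Qed.

End DualSpace.

Lemma dadd_dsub (l l' : dvec) : dadd l' (dsub l l') = l.
Proof.
  destruct l as [nu mu]; unfold dadd, dsub; simpl.
  f_equal; do 2 (apply functional_extensionality; intros); ring.
Qed.

Definition blkmul (B : bmat) (j i m : nat) (x : vec) : vec :=
  fun r => rsum m (fun k => B j i r k * x k).

Lemma blkmul_vscal B j i m a x : blkmul B j i m (vscal a x) = vscal a (blkmul B j i m x).
Proof.
  apply functional_extensionality; intros r; unfold blkmul, vscal.
  rewrite <- rsum_scal. apply rsum_ext; intros; ring.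
Qed.

Section SpectralNorm.

Variables (Mb : nat) (n p q : nat -> nat) (E : nat -> nat -> bool) (A C : bmat) (i : nat).

Lemma stack_nsq_vscal a x :
  stack_nsq Mb n p q E A C i (vscal a x) = a * a * stack_nsq Mb n p q E A C i x.
Proof.
  unfold stack_nsq. rewrite <- rsum_scal. apply rsum_ext; intros j _.
  destruct (E j i); [|ring].
  change (nsq (p j) (blkmul A j i (n i) (vscal a x)) + nsq (q j) (blkmul C j i (n i) (vscal a x))
    = a * a * (nsq (p j) (blkmul A j i (n i) x) + nsq (q j) (blkmul C j i (n i) x))).
  rewrite !blkmul_vscal, !nsq_vscal. ring.
Qed.

Lemma stack_nsq_nonneg x : 0 <= stack_nsq Mb n p q E A C i x.
Proof.
  apply rsum_nonneg; intros j _. destruct (E j i); [|lra].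
  apply Rplus_le_le_0_compat; apply nsq_nonneg.
Qed.

Lemma spec_norm_sq_nonneg s : spec_norm_sq Mb n p q E A C i s -> 0 <= s.
Proof.
  intros [Hub _]. set (x0 := vscal 0 (fun _ => 0)).
  apply (Rle_trans _ (stack_nsq Mb n p q E A C i x0)); [apply stack_nsq_nonneg|].
  apply Hub. exists x0. split; [|reflexivity].
  unfold x0. rewrite nsq_vscal. lra.
Qed.

Lemma stack_nsq_le s x :
  spec_norm_sq Mb n p q E A C i s -> stack_nsq Mb n p q E A C i x <= s * nsq (n i) x.
Proof.
  intros Hs. apply (le_of_le_add_mul _ _ s); intros e He.
  pose proof (nsq_nonneg (n i) x) as HN.
  set (a := / sqrt (nsq (n i) x + e)).
  assert (Ha : a * a = / (nsq (n i) x + e)).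
  { unfold a. rewrite <- Rinv_mult, sqrt_sqrt; lra. }
  assert (Hscaled : a * a * stack_nsq Mb n p q E A C i x <= s).
  { destruct Hs as [Hub _]. rewrite <- stack_nsq_vscal. apply Hub.
    exists (vscal a x). split; [|reflexivity].
    rewrite nsq_vscal, Ha. apply (Rmult_le_reg_l (nsq (n i) x + e)); [lra|].
    field_simplify; lra. }
  rewrite Ha in Hscaled.
  apply (Rmult_le_compat_l (nsq (n i) x + e)) in Hscaled; [|lra].
  replace ((nsq (n i) x + e) * (/ (nsq (n i) x + e) * stack_nsq Mb n p q E A C i x))
    with (stack_nsq Mb n p q E A C i x) in Hscaled by (field; lra).
  lra.
Qed.

Lemma stack_nsq_div_le s x t sg :
  spec_norm_sq Mb n p q E A C i s -> 0 < t -> s <= sg * t ->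
  stack_nsq Mb n p q E A C i x / t <= sg * nsq (n i) x.
Proof.
  intros Hs Ht Hst. pose proof (stack_nsq_le s x Hs). pose proof (nsq_nonneg (n i) x).
  apply (Rmult_le_reg_l t); [exact Ht|].
  replace (t * (stack_nsq Mb n p q E A C i x / t)) with (stack_nsq Mb n p q E A C i x)
    by (field; lra).
  nra.
Qed.

End SpectralNorm.

Lemma wnsq_lin M Mb p q E (L1 L2 : nat -> R) e l :
  wnsq M Mb p q E (fun i => L1 i + e * L2 i) l = wnsq M Mb p q E L1 l + e * wnsq M Mb p q E L2 l.
Proof.
  unfold wnsq. rewrite <- rsum_scal, <- rsum_add. apply rsum_ext; intros j _.
  rewrite (rsum_ext _ _ (fun i => (if E j i then L1 i else 0) + e * (if E j i then L2 i else 0)))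
    by (intros i _; destruct (E j i); ring).
  rewrite rsum_add, rsum_scal. ring.
Qed.

Section Lagrangian.

Variables (M Mb : nat) (n p q : nat -> nat) (A C : bmat) (b c : bvec).
Variables (f : nat -> vec -> R) (sigma : nat -> R).

Local Notation Lag := (lagrangian M Mb n p q f A C b c).

Definition residual (z : pvec) : dvec :=
  (fun j => vsub (bmatvec M n A z j) (b j), fun j => vsub (bmatvec M n C z j) (c j)).

Definition gmul (u : pvec) : dvec := (fun j => bmatvec M n A u j, fun j => bmatvec M n C u j).

Definition psub (z1 z2 : pvec) : pvec := fun i => vsub (z1 i) (z2 i).

Definition pcomb (t : R) (z1 z2 : pvec) : pvec :=
  fun i => vadd (vscal t (z1 i)) (vscal (1 - t) (z2 i)).

Definition sigma_sqnorm (u : pvec) : R := rsum M (fun i => sigma i * nsq (n i) (u i)).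

Definition coupling (j i : nat) (x : vec) (h : dvec) : R :=
  dot (p j) (blkmul A j i (n i) x) (fst h j) + dot (q j) (blkmul C j i (n i) x) (snd h j).

Lemma lagrangian_split z l : Lag z l = rsum M (fun i => f i (z i)) + ddot Mb p q (residual z) l.
Proof.
  unfold lagrangian, ddot. rewrite Rplus_assoc, <- rsum_add. f_equal.
  apply rsum_ext; intros j _; simpl. rewrite (dot_comm (p j)), (dot_comm (q j)). reflexivity.
Qed.

Lemma lagrangian_dadd z l h : Lag z (dadd l h) = Lag z l + ddot Mb p q (residual z) h.
Proof. rewrite !lagrangian_split, ddot_dadd_r. ring. Qed.

Lemma bmatvec_pcomb (B : bmat) t z1 z2 j r :
  bmatvec M n B (pcomb t z1 z2) j r = t * bmatvec M n B z1 j r + (1 - t) * bmatvec M n B z2 j r.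
Proof.
  unfold bmatvec, pcomb. rewrite <- !rsum_scal, <- rsum_add. apply rsum_ext; intros.
  rewrite <- !rsum_scal, <- rsum_add. apply rsum_ext; intros. unfold vadd, vscal; ring.
Qed.

Lemma bmatvec_psub (B : bmat) z1 z2 j r :
  bmatvec M n B (psub z1 z2) j r = bmatvec M n B z1 j r - bmatvec M n B z2 j r.
Proof.
  unfold bmatvec, psub. rewrite <- rsum_sub. apply rsum_ext; intros.
  rewrite <- rsum_sub. apply rsum_ext; intros. unfold vsub; ring.
Qed.

Lemma residual_pcomb t z1 z2 :
  residual (pcomb t z1 z2) = dadd (dscal t (residual z1)) (dscal (1 - t) (residual z2)).
Proof.
  unfold residual, dadd, dscal; simpl.
  f_equal; do 2 (apply functional_extensionality; intros); unfold vsub;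
    rewrite bmatvec_pcomb; ring.
Qed.

Lemma residual_psub z1 z2 : residual z1 = dadd (residual z2) (gmul (psub z1 z2)).
Proof.
  unfold residual, dadd, gmul; simpl.
  f_equal; do 2 (apply functional_extensionality; intros); unfold vsub;
    rewrite bmatvec_psub; ring.
Qed.

Lemma ddot_gmul u h :
  ddot Mb p q (gmul u) h = rsum Mb (fun j => rsum M (fun i => coupling j i (u i) h)).
Proof.
  apply rsum_ext; intros j _. unfold coupling. rewrite rsum_add. simpl.
  unfold bmatvec. rewrite !dot_rsum_l. reflexivity.
Qed.

Hypothesis Hsc : forall i, (i < M)%nat -> strongly_convex (n i) (sigma i) (f i).

Lemma sigma_sqnorm_nonneg u : 0 <= sigma_sqnorm u.
Proof.
  apply rsum_nonneg; intros i Hi. destruct (Hsc i Hi) as [Hsig _].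
  pose proof (nsq_nonneg (n i) (u i)). nra.
Qed.

Lemma lagrangian_pcomb t z1 z2 l : 0 <= t <= 1 ->
  Lag (pcomb t z1 z2) l
  <= t * Lag z1 l + (1 - t) * Lag z2 l - t * (1 - t) / 2 * sigma_sqnorm (psub z1 z2).
Proof.
  intros Ht. rewrite !lagrangian_split, residual_pcomb, ddot_dadd_l, !ddot_dscal_l.
  assert (Hf : rsum M (fun i => f i (pcomb t z1 z2 i))
    <= rsum M (fun i => t * f i (z1 i) + (1 - t) * f i (z2 i)
                        - t * (1 - t) / 2 * (sigma i * nsq (n i) (psub z1 z2 i)))).
  { apply rsum_le; intros i Hi. destruct (Hsc i Hi) as [_ Hconv].
    specialize (Hconv (z1 i) (z2 i) t Ht). unfold pcomb, psub. lra. }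
  rewrite rsum_sub, rsum_add, !rsum_scal in Hf. unfold sigma_sqnorm. lra.
Qed.

Lemma lagrangian_min_gap z1 z2 l : (forall z, Lag z2 l <= Lag z l) ->
  Lag z2 l + sigma_sqnorm (psub z1 z2) / 2 <= Lag z1 l.
Proof.
  intros Hmin. pose proof (sigma_sqnorm_nonneg (psub z1 z2)) as HS.
  assert (Hgap : forall t, 0 < t <= 1 ->
    (1 - t) * sigma_sqnorm (psub z1 z2) / 2 <= Lag z1 l - Lag z2 l).
  { intros t Ht. pose proof (lagrangian_pcomb t z1 z2 l ltac:(lra)).
    pose proof (Hmin (pcomb t z1 z2)).
    apply (Rmult_le_reg_l t); [lra | nra]. }
  enough (sigma_sqnorm (psub z1 z2) / 2 <= Lag z1 l - Lag z2 l) by lra.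
  apply (le_of_le_add_mul _ _ (sigma_sqnorm (psub z1 z2) / 2)); intros e He.
  destruct (Rle_lt_dec e 1) as [He1 | He1].
  - specialize (Hgap e ltac:(lra)). nra.
  - specialize (Hgap 1 ltac:(lra)). nra.
Qed.

Variables (E : nat -> nat -> bool) (sn : nat -> R).

Hypothesis HE : forall j i, (j < Mb)%nat -> (i < M)%nat -> E j i = false ->
  (forall r k, (r < p j)%nat -> (k < n i)%nat -> A j i r k = 0) /\
  (forall r k, (r < q j)%nat -> (k < n i)%nat -> C j i r k = 0).

Hypothesis Hsn : forall i, (i < M)%nat -> spec_norm_sq Mb n p q E A C i (sn i).

Lemma coupling_ge j i x h t : (j < Mb)%nat -> (i < M)%nat -> 0 < t ->
  - ((if E j i then t else 0) * (nsq (p j) (fst h j) + nsq (q j) (snd h j))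
     + (if E j i then nsq (p j) (blkmul A j i (n i) x) + nsq (q j) (blkmul C j i (n i) x)
        else 0) / t) / 2
  <= coupling j i x h.
Proof.
  intros Hj Hi Ht. unfold coupling. destruct (E j i) eqn:Eji; cbv iota.
  - pose proof (dot_young (p j) (blkmul A j i (n i) x) (fst h j) t Ht).
    pose proof (dot_young (q j) (blkmul C j i (n i) x) (snd h j) t Ht).
    (* [fst h j] was elaborated at the convertible types bvec and nat -> vec, which
       lra would treat as different atoms. *)
    unfold bvec, vec in *. lra.
  - destruct (HE j i Hj Hi Eji) as [HA HC].
    rewrite !dot_zero_l.
    + unfold Rdiv. lra.
    + intros r Hr. apply (dot_zero_l (n i)). intros; apply HC; auto.
    + intros r Hr. apply (dot_zero_l (n i)). intros; apply HA; auto.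
Qed.

Lemma coupling_sum_ge u h :
  - (wnsq M Mb p q E (fun i => sn i / sigma i) h + sigma_sqnorm u) / 2
  <= rsum Mb (fun j => rsum M (fun i => coupling j i (u i) h)).
Proof.
  (* Young's weight (s_i + e) / sigma_i stays positive even when s_i = 0. *)
  apply (le_of_le_add_mul _ _ (wnsq M Mb p q E (fun i => / sigma i) h / 2)); intros e He.
  set (t := fun i => sn i / sigma i + e * / sigma i).
  assert (Ht : forall i, (i < M)%nat -> 0 < t i /\ sigma i * t i = sn i + e).
  { intros i Hi. destruct (Hsc i Hi) as [Hsig _].
    pose proof (spec_norm_sq_nonneg _ _ _ _ _ _ _ _ _ (Hsn i Hi)).
    assert (Hsti : sigma i * t i = sn i + e) by (unfold t; field; lra).
    split; [|exact Hsti]. apply (Rmult_lt_reg_l (sigma i)); lra. }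
  assert (Hyoung :
    rsum Mb (fun j => rsum M (fun i =>
      -/2 * ((if E j i then t i else 0) * (nsq (p j) (fst h j) + nsq (q j) (snd h j)))
      + -/2 * ((if E j i then nsq (p j) (blkmul A j i (n i) (u i))
                             + nsq (q j) (blkmul C j i (n i) (u i)) else 0) / t i)))
    <= rsum Mb (fun j => rsum M (fun i => coupling j i (u i) h))).
  { apply rsum_le; intros j Hj. apply rsum_le; intros i Hi.
    pose proof (coupling_ge j i (u i) h (t i) Hj Hi (proj1 (Ht i Hi))).
    unfold bvec, vec in *. lra. }
  rewrite rsum2_lin in Hyoung.
  assert (Hw : rsum Mb (fun j => rsum M (fun i =>
      (if E j i then t i else 0) * (nsq (p j) (fst h j) + nsq (q j) (snd h j))))
    = wnsq M Mb p q E (fun i => sn i / sigma i) h + e * wnsq M Mb p q E (fun i => / sigma i) h).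
  { rewrite <- wnsq_lin. apply rsum_ext; intros j _. apply rsum_mulr. }
  assert (Hk : rsum Mb (fun j => rsum M (fun i =>
      (if E j i then nsq (p j) (blkmul A j i (n i) (u i))
                    + nsq (q j) (blkmul C j i (n i) (u i)) else 0) / t i))
    <= sigma_sqnorm u).
  { rewrite rsum_swap. apply rsum_le; intros i Hi. unfold Rdiv. rewrite rsum_mulr.
    destruct (Ht i Hi) as [Hti Hsti].
    apply (stack_nsq_div_le _ _ _ _ _ _ _ _ _ _ _ _ (Hsn i Hi) Hti); lra. }
  rewrite Hw in Hyoung. lra.
Qed.

Variable d : dvec -> R.

Hypothesis Hd : forall l, is_min_value (fun z => Lag z l) (d l).

Lemma dual_quadratic_lower_bound l lb gd :
  has_dgradient Mb p q d lb gd ->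
  d l >= d lb + ddot Mb p q gd (dsub l lb)
         - 1 / 2 * wnsq M Mb p q E (fun i => sn i / sigma i) (dsub l lb).
Proof.
  intros Hgd.
  destruct (Hd lb) as [[zb Hzb] Hzb_min], (Hd l) as [[zs Hzs] _]; cbv beta in *.
  set (D := dsub l lb).
  assert (Hshift : d l = Lag zs lb + ddot Mb p q (residual zs) D).
  { rewrite <- Hzs, <- lagrangian_dadd. unfold D. rewrite dadd_dsub. reflexivity. }
  assert (Hgap : d lb + sigma_sqnorm (psub zs zb) / 2 <= Lag zs lb).
  { rewrite <- Hzb. apply lagrangian_min_gap. intros z. rewrite Hzb. apply Hzb_min. }
  assert (Hres : ddot Mb p q (residual zs) D = ddot Mb p q (residual zb) D
      + rsum Mb (fun j => rsum M (fun i => coupling j i (psub zs zb i) D))).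
  { rewrite (residual_psub zs zb), ddot_dadd_l, ddot_gmul. reflexivity. }
  assert (Hgrad : ddot Mb p q gd D <= ddot Mb p q (residual zb) D).
  { apply (dgradient_le_slope Mb p q d lb); [exact Hgd|]. intros t Ht.
    rewrite <- Hzb, <- ddot_dscal_r, <- lagrangian_dadd. apply (proj2 (Hd _)). }
  pose proof (coupling_sum_ge (psub zs zb) D).
  lra.
Qed.

End Lagrangian.

Theorem lemma1
  (M Mb : nat) (n p q : nat -> nat)
  (A C : bmat) (b c : bvec) (E : nat -> nat -> bool)
  (f : nat -> vec -> R) (sigma Lf : nat -> R)
  (HE : forall j i, (j < Mb)%nat -> (i < M)%nat -> E j i = false ->
          (forall r k, (r < p j)%nat -> (k < n i)%nat -> A j i r k = 0) /\
          (forall r k, (r < q j)%nat -> (k < n i)%nat -> C j i r k = 0))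
  (Hresp : forall i, (i < M)%nat -> respects (n i) (f i))
  (Hsc : forall i, (i < M)%nat -> strongly_convex (n i) (sigma i) (f i))
  (Hlip : forall i, (i < M)%nat -> lipschitz_gradient (n i) (Lf i) (f i))
  (sn : nat -> R)
  (Hsn : forall i, (i < M)%nat -> spec_norm_sq Mb n p q E A C i (sn i))
  (d : dvec -> R)
  (Hd : forall l : dvec, is_min_value (fun z : pvec => lagrangian M Mb n p q f A C b c z l) (d l))
  (l lb gd : dvec)
  (Hl : in_D Mb q l) (Hlb : in_D Mb q lb)
  (Hgd : has_dgradient Mb p q d lb gd) :
  d l >= d lb + ddot Mb p q gd (dsub l lb)
         - 1 / 2 * wnsq M Mb p q E (fun i => sn i / sigma i) (dsub l lb).
Proof.
  eapply dual_quadratic_lower_bound; eassumption.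
Qed.
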